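(* Let $X$ be a uniformly locally finite metric space and let $h$ and $k$ be admissible operators on $\ell_2(X)$. Then: (a) $\|h-k\|=\|(h-k)\restriction_{c_{00}(X)}\|$, where $h-k$ is defined on $\mathrm{dom}(h)\cap\mathrm{dom}(k)$ and norms are possibly infinite; (b) if $h-k$ is bounded on $c_{00}(X)$, then $\mathrm{dom}(h)=\mathrm{dom}(k)$.
   Context: $(\delta_x)$ is the canonical basis of $\ell_2(X)$ and $c_{00}(X)$ the space of finitely supported vectors. An operator $h$ on $\ell_2(X)$ (a possibly unbounded linear map on a subspace $\mathrm{dom}(h)$) is admissible if it is closed, $c_{00}(X)\subseteq\mathrm{dom}(h)$, and $h\xi=\sum_{y\in X}\langle\xi,\delta_y\rangle h\delta_y$ for all $\xi\in\mathrm{dom}(h)$. For an operator $h$, $\|h\|=\sup\{\|h\xi\|:\xi\in\mathrm{dom}(h),\|\xi\|\le1\}\in[0,\infty]$. *)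

From HB Require Import structures.
From mathcomp Require Import all_boot all_order all_algebra.
From mathcomp Require Import all_classical all_reals all_analysis.
From mathcomp.real_closed Require Import complex.
Set Implicit Arguments. Unset Strict Implicit. Unset Printing Implicit Defensive.
Import Order.TTheory GRing.Theory Num.Theory.
Import numFieldNormedType.Exports.
Local Open Scope classical_set_scope.
Local Open Scope ring_scope.

Section L2.
Variable R : realType.
Variable X : choiceType.

Definition is_metric (d : X -> X -> R) : Prop :=
  (forall x y, 0 <= d x y) /\ (forall x y, d x y = 0 <-> x = y) /\
  (forall x y, d x y = d y x) /\ (forall x y z, d x z <= d x y + d y z).

Definition unif_loc_finite (d : X -> X -> R) : Prop :=
  forall r : R, 0 < r -> exists N : nat,
    forall x : X, ([set y | d x y <= r] #<= `I_N)%card.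

Definition vec := X -> R[i].

Definition sqmod (z : R[i]) : R := (complex.Re z) ^+ 2 + (complex.Im z) ^+ 2.

Definition sqnorm (xi : vec) : \bar R := (\esum_(x in [set: X]) (sqmod (xi x))%:E)%E.

Definition l2 : set vec := [set xi | (sqnorm xi < +oo)%E].

Definition l2norm (xi : vec) : R := Num.sqrt (fine (sqnorm xi)).

Definition vsub (xi eta : vec) : vec := fun x => xi x - eta x.

Definition delta (y : X) : vec := fun x => if x == y then 1 else 0.

Definition c00 : set vec := [set xi | finite_set [set x | xi x != 0]].

Definition is_operator (dom : set vec) (h : vec -> vec) : Prop :=
  dom `<=` l2 /\ dom (fun _ => 0) /\
  (forall xi eta, dom xi -> dom eta -> dom (fun x => xi x + eta x)) /\
  (forall (a : R[i]) xi, dom xi -> dom (fun x => a * xi x)) /\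
  (forall xi, dom xi -> l2 (h xi)) /\
  (forall xi eta, dom xi -> dom eta -> h (fun x => xi x + eta x) = (fun x => h xi x + h eta x)) /\
  (forall (a : R[i]) xi, dom xi -> h (fun x => a * xi x) = (fun x => a * h xi x)).

Definition is_closed_op (dom : set vec) (h : vec -> vec) : Prop :=
  forall (u : nat -> vec) (xi eta : vec),
    (forall n, dom (u n)) -> l2 xi -> l2 eta ->
    (fun n => l2norm (vsub (u n) xi)) @ \oo --> (0 : R^o) ->
    (fun n => l2norm (vsub (h (u n)) eta)) @ \oo --> (0 : R^o) ->
    dom xi /\ h xi = eta.

(* h xi = sum_y <xi, delta_y> h delta_y, the sum converging (unconditionally)
   in the norm of l2(X); note <xi, delta_y> = xi y *)
Definition expansion (h : vec -> vec) (xi : vec) : Prop :=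
  forall e : R, 0 < e -> exists F0 : set X, finite_set F0 /\
    forall F : set X, finite_set F -> F0 `<=` F ->
      l2norm (vsub (h xi) (fun x => \sum_(y \in F) xi y * h (delta y) x)) < e.

Definition admissible (dom : set vec) (h : vec -> vec) : Prop :=
  is_operator dom h /\ is_closed_op dom h /\ c00 `<=` dom /\
  (forall xi, dom xi -> expansion h xi).

Definition opnorm (D : set vec) (h : vec -> vec) : \bar R :=
  ereal_sup [set (l2norm (h xi))%:E | xi in [set xi | D xi /\ l2norm xi <= 1]].

End L2.

From HB Require Import structures.
From mathcomp Require Import all_boot all_order all_algebra.
From mathcomp Require Import all_classical all_reals all_analysis.
From mathcomp.real_closed Require Import complex.
From mathcomp Require Import ring lra.
Set Implicit Arguments. Unset Strict Implicit. Unset Printing Implicit Defensive.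
Import Order.TTheory GRing.Theory Num.Theory.
Import numFieldNormedType.Exports.
Local Open Scope classical_set_scope.
Local Open Scope ring_scope.
Local Open Scope complex_scope.

(* Truncating xi to finite sets gives vectors of c00 that do not increase the
   norm and converge to xi; by the expansion property their images under an
   admissible operator converge to the image of xi.  This gives (a).  For (b),
   if h - k is bounded on c00 and xi is in dom h, truncations u_n -> xi with
   h u_n -> h xi make (h - k) u_n a Cauchy sequence, which converges because
   l2(X) is complete; so k u_n = h u_n - (h - k) u_n converges as well and the
   closedness of k puts xi in dom k. *)

Lemma cvgn_dist_le (R : realType) (f r : nat -> R) : r @ \oo --> 0 ->
  (forall n m, `|f n - f m| <= r n + r m) -> cvgn f.
Proof.
move=> /cvgrPdist_lt r0 fr; apply: cauchy_cvg; apply: cauchy_exP => e e0.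
have [N _ rN] := r0 (e / 2) (divr_gt0 e0 (ltr0Sn _ 1)).
exists (f N), N => // n /= Nn.
have := rN N (leqnn N); have := rN n Nn; rewrite /= !sub0r !normrN => rn rNN.
apply: le_lt_trans (fr N n) _.
have := ler_norm (r N); have := ler_norm (r n); lra.
Qed.

Section SquaredModulus.
Variable R : realType.
Implicit Types (z w : R[i]) (t : R).

Lemma sqmod_ge0 z : 0 <= sqmod z.
Proof. by rewrite /sqmod addr_ge0 // sqr_ge0. Qed.

Lemma sqmod0 : sqmod (0 : R[i]) = 0.
Proof. by rewrite /sqmod /= expr0n addr0. Qed.

Lemma sqmodN z : sqmod (- z) = sqmod z.
Proof. by case: z => a b; rewrite /sqmod /= !sqrrN. Qed.

Lemma sqmodBC z w : sqmod (z - w) = sqmod (w - z).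
Proof. by rewrite -opprB sqmodN. Qed.

Lemma sqmodZ t z : sqmod (t%:C * z) = t ^+ 2 * sqmod z.
Proof. by case: z => a b; rewrite /sqmod /=; ring. Qed.

Lemma ReB z w : complex.Re (z - w) = complex.Re z - complex.Re w.
Proof. by case: z => a b; case: w. Qed.

Lemma ImB z w : complex.Im (z - w) = complex.Im z - complex.Im w.
Proof. by case: z => a b; case: w. Qed.

Lemma normr_Re_le z t : 0 <= t -> sqmod z <= t ^+ 2 -> `|complex.Re z| <= t.
Proof.
move=> t0 zt; rewrite -ler_sqr ?nnegrE // real_normK ?num_real //.
by apply: le_trans zt; rewrite /sqmod lerDl sqr_ge0.
Qed.

Lemma normr_Im_le z t : 0 <= t -> sqmod z <= t ^+ 2 -> `|complex.Im z| <= t.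
Proof.
move=> t0 zt; rewrite -ler_sqr ?nnegrE // real_normK ?num_real //.
by apply: le_trans zt; rewrite /sqmod lerDr sqr_ge0.
Qed.

(* The cross term 2 Re (z w^* ) is bounded by Young's inequality. *)
Lemma sqmodD_le z w t : 0 < t ->
  sqmod (z + w) <= (1 + t) * sqmod z + (1 + t^-1) * sqmod w.
Proof.
case: z => a b; case: w => c d t0; rewrite /sqmod /=.
have tu : t * t^-1 = 1 by rewrite mulfV // gt_eqF.
have : 0 < t^-1 by rewrite invr_gt0.
move: (t^-1) tu => u tu u0.
have ha : 0 <= u * (t * a - c) ^+ 2 by rewrite mulr_ge0 ?sqr_ge0 // ltW.
have hb : 0 <= u * (t * b - d) ^+ 2 by rewrite mulr_ge0 ?sqr_ge0 // ltW.
have ea : u * (t * a - c) ^+ 2 = t * u * t * a ^+ 2 - 2 * (t * u) * a * c + u * c ^+ 2 by ring.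
have eb : u * (t * b - d) ^+ 2 = t * u * t * b ^+ 2 - 2 * (t * u) * b * d + u * d ^+ 2 by ring.
rewrite ea eb tu !mul1r in ha hb; lra.
Qed.

End SquaredModulus.

Section L2Space.
Variables (R : realType) (X : choiceType).
Local Notation vec := (vec R X).
Local Notation l2 := (@l2 R X).
Local Notation c00 := (@c00 R X).
Implicit Types (u v w : vec) (s : seq X).

Definition sqnorm_seq v s : R := \sum_(x <- s) sqmod (v x).

Lemma sqnorm_ge0 v : (0 <= sqnorm v)%E.
Proof. by apply: esum_ge0 => x _; rewrite lee_fin sqmod_ge0. Qed.

Lemma sqnorm_seq_le_sqnorm v s : uniq s -> ((sqnorm_seq v s)%:E <= sqnorm v)%E.
Proof.
move=> us; apply: esum_ge; exists [set` s]; first by split => //; apply: finite_seq.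
by rewrite -fsbig_seq // sumEFin.
Qed.

Lemma sqnorm_le v (c : R) :
  (forall s, uniq s -> sqnorm_seq v s <= c) -> (sqnorm v <= c%:E)%E.
Proof.
move=> vc; apply: ge_ereal_sup => _ [A [finA _] <-].
by rewrite fsbig_finite // sumEFin lee_fin vc // finmap.fset_uniq.
Qed.

Lemma sqnorm_eq u v : (forall x, sqmod (u x) = sqmod (v x)) -> sqnorm u = sqnorm v.
Proof. by move=> uv; apply: eq_esum => x _; rewrite uv. Qed.

Lemma l2norm_ge0 v : 0 <= l2norm v.
Proof. exact: sqrtr_ge0. Qed.

Lemma l2_sqnormE v : l2 v -> sqnorm v = (l2norm v ^+ 2)%:E.
Proof.
move=> lv; rewrite sqr_sqrtr ?fine_ge0 ?sqnorm_ge0 // fineK //.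
by rewrite ge0_fin_numE // sqnorm_ge0.
Qed.

Lemma sqnorm_seq_le v s : l2 v -> uniq s -> sqnorm_seq v s <= l2norm v ^+ 2.
Proof. by move=> lv us; rewrite -lee_fin -l2_sqnormE // sqnorm_seq_le_sqnorm. Qed.

Lemma l2_of_sqnorm_seq_le v (c : R) : 0 <= c ->
  (forall s, uniq s -> sqnorm_seq v s <= c ^+ 2) -> l2 v /\ l2norm v <= c.
Proof.
move=> c0 /sqnorm_le vc.
have lv : l2 v by rewrite /l2 /=; apply: le_lt_trans vc (ltry _).
split => //; rewrite -ler_sqr ?nnegrE ?l2norm_ge0 // -lee_fin -l2_sqnormE //.
Qed.

Lemma sqmod_le_l2norm v x : l2 v -> sqmod (v x) <= l2norm v ^+ 2.
Proof.
by move=> lv; have := sqnorm_seq_le lv (isT : uniq [:: x]); rewrite /sqnorm_seq big_seq1.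
Qed.

Lemma l2_vsubC u v : l2 (vsub u v) -> l2 (vsub v u).
Proof.
by rewrite /l2 /= (@sqnorm_eq (vsub v u) (vsub u v)) // => x; rewrite /vsub sqmodBC.
Qed.

Lemma l2norm_vsubC u v : l2norm (vsub u v) = l2norm (vsub v u).
Proof.
by rewrite /l2norm (@sqnorm_eq (vsub u v) (vsub v u)) // => x; rewrite /vsub sqmodBC.
Qed.

Lemma sqnorm_seqD_le u v s (a b : R) : 0 <= a -> 0 <= b ->
  sqnorm_seq u s <= a ^+ 2 -> sqnorm_seq v s <= b ^+ 2 ->
  sqnorm_seq (fun x => u x + v x) s <= (a + b) ^+ 2.
Proof.
move=> a0 b0 ua vb; apply/ler_addgt0Pr => eps eps0.
pose e := eps / (a + b + 1).
have ab1 : 0 < a + b + 1 by rewrite ltr_wpDl ?addr_ge0.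
have e0 : 0 < e by rewrite divr_gt0.
have ae : 0 < a + e by rewrite ltr_wpDl.
have be : 0 < b + e by rewrite ltr_wpDl.
(* the weight t = (b + e) / (a + e) nearly optimizes Young's inequality *)
pose t := (b + e) / (a + e).
have t0 : 0 < t by rewrite divr_gt0.
have tV : t^-1 = (a + e) / (b + e) by rewrite invf_div.
have young : sqnorm_seq (fun x => u x + v x) s <=
    (1 + t) * sqnorm_seq u s + (1 + t^-1) * sqnorm_seq v s.
  rewrite /sqnorm_seq !mulr_sumr -big_split; apply: ler_sum => x _.
  exact: sqmodD_le.
have ta : t * a ^+ 2 <= (b + e) * a.
  rewrite mulrAC ler_pdivrMr // -mulrA; apply: ler_wpM2l; first exact: ltW.
  by rewrite expr2; apply: ler_wpM2l => //; rewrite lerDl ltW.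
have tb : t^-1 * b ^+ 2 <= (a + e) * b.
  rewrite tV mulrAC ler_pdivrMr // -mulrA; apply: ler_wpM2l; first exact: ltW.
  by rewrite expr2; apply: ler_wpM2l => //; rewrite lerDl ltW.
have eab : e * (a + b) <= eps.
  by rewrite -[eps](divfK (lt0r_neq0 ab1)); apply: ler_wpM2l; rewrite ?lerDl ltW.
have ua' := ler_wpM2l (addr_ge0 ler01 (ltW t0)) ua.
have tV0 : 0 <= t^-1 by rewrite invr_ge0 ltW.
have vb' := ler_wpM2l (addr_ge0 ler01 tV0) vb.
lra.
Qed.

Lemma l2normD_le u v : l2 u -> l2 v ->
  l2 (fun x => u x + v x) /\ l2norm (fun x => u x + v x) <= l2norm u + l2norm v.
Proof.
move=> lu lv; apply: l2_of_sqnorm_seq_le; first by rewrite addr_ge0 ?l2norm_ge0.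
by move=> s us; apply: sqnorm_seqD_le; rewrite ?l2norm_ge0 ?sqnorm_seq_le.
Qed.

Lemma l2norm_distD u v w : l2 (vsub u v) -> l2 (vsub v w) ->
  l2 (vsub u w) /\ l2norm (vsub u w) <= l2norm (vsub u v) + l2norm (vsub v w).
Proof.
have -> : vsub u w = fun x => vsub u v x + vsub v w x.
  by apply: funext => x; rewrite /vsub addrA subrK.
exact: l2normD_le.
Qed.

Lemma l2norm_vsub_vsub_le a a' b eta : l2 (vsub a' a) -> l2 (vsub (vsub a b) eta) ->
  l2 (vsub b (vsub a' eta)) /\
  l2norm (vsub b (vsub a' eta)) <= l2norm (vsub a' a) + l2norm (vsub (vsub a b) eta).
Proof.
move=> la'a lw; have -> : vsub b (vsub a' eta) = fun x => vsub a a' x + vsub eta (vsub a b) x.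
  by apply: funext => x; rewrite /vsub; ring.
rewrite (l2norm_vsubC a') (l2norm_vsubC (vsub a b)).
exact: l2normD_le (l2_vsubC la'a) (l2_vsubC lw).
Qed.

Lemma l2_vsub u v : l2 u -> l2 v -> l2 (vsub u v).
Proof.
move=> lu lv; have lNv : l2 (fun x => - v x).
  by rewrite /l2 /= (@sqnorm_eq _ v) // => x; rewrite sqmodN.
exact: (l2normD_le lu lNv).1.
Qed.

Lemma l2normZ_le v (r : R) : l2 v -> 0 <= r ->
  l2 (fun x => r%:C * v x) /\ l2norm (fun x => r%:C * v x) <= r * l2norm v.
Proof.
move=> lv r0; apply: l2_of_sqnorm_seq_le; first by rewrite mulr_ge0 ?l2norm_ge0.
move=> s us; rewrite /sqnorm_seq; under eq_bigr do rewrite sqmodZ.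
by rewrite -mulr_sumr exprMn ler_wpM2l ?sqr_ge0 // sqnorm_seq_le.
Qed.

Definition trunc s v : vec := fun x => if x \in s then v x else 0.

Lemma c00_seq v s : (forall x, v x != 0 -> x \in s) -> c00 v.
Proof. by move=> vs; apply: (sub_finite_set _ (finite_seq s)) => x /vs. Qed.

Lemma trunc_c00 s v : c00 (trunc s v).
Proof. by apply: (@c00_seq _ s) => x; rewrite /trunc; case: ifP => // _; rewrite eqxx. Qed.

Lemma l2norm_trunc_le s v : l2 v -> l2 (trunc s v) /\ l2norm (trunc s v) <= l2norm v.
Proof.
move=> lv; apply: l2_of_sqnorm_seq_le; first exact: l2norm_ge0.
move=> t ut; apply: le_trans (sqnorm_seq_le lv ut); apply: ler_sum => x _.
by rewrite /trunc; case: ifP => _; rewrite ?sqmod0 ?sqmod_ge0.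
Qed.

Lemma sqnorm_seq_vsub_trunc v s t :
  sqnorm_seq (vsub (trunc s v) v) t = sqnorm_seq v [seq x <- t | x \notin s].
Proof.
rewrite /sqnorm_seq big_filter [RHS]big_mkcond; apply: eq_bigr => x _.
by rewrite /vsub /trunc; case: ifP => _ /=; rewrite ?subrr ?sqmod0 // sub0r sqmodN.
Qed.

Lemma sqnorm_seq_subset v s s' : uniq s -> uniq s' -> {subset s <= s'} ->
  sqnorm_seq v s <= sqnorm_seq v s'.
Proof.
move=> us us' ss'; rewrite /sqnorm_seq.
rewrite (perm_big [seq x <- s' | x \in s]) /=; last first.
  apply: uniq_perm; rewrite ?filter_uniq // => x.
  by rewrite mem_filter; case: (boolP (x \in s)) => // /ss' ->.
rewrite big_filter big_mkcond; apply: ler_sum => x _.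
by case: ifP => _; rewrite ?sqmod_ge0.
Qed.

Definition eventually_finite (P : seq X -> Prop) : Prop :=
  exists F : set X, finite_set F /\ forall s, uniq s -> F `<=` [set` s] -> P s.

Lemma eventually_finiteI (P Q : seq X -> Prop) :
  eventually_finite P -> eventually_finite Q -> eventually_finite (fun s => P s /\ Q s).
Proof.
move=> [F [fF FP]] [G [fG GQ]]; exists (F `|` G); split; first by rewrite finite_setU.
by move=> s us FGs; split; [apply: FP | apply: GQ] => // x ?; apply: FGs; [left|right].
Qed.

Lemma eventually_finite_ex (P : seq X -> Prop) :
  eventually_finite P -> exists s, uniq s /\ P s.
Proof.
move=> [F [fF FP]]; exists (finmap.enum_fset (fset_set F)).
split; first exact: finmap.fset_uniq.
by apply: FP; first exact: finmap.fset_uniq; move=> x Fx /=; rewrite in_fset_set // inE.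
Qed.

Lemma trunc_approx v e : l2 v -> 0 < e ->
  eventually_finite (fun s => l2 (vsub (trunc s v) v) /\ l2norm (vsub (trunc s v) v) <= e).
Proof.
move=> lv e0; have e20 : 0 < e ^+ 2 by rewrite exprn_gt0.
have finv : sqnorm v \is a fin_num by rewrite l2_sqnormE.
have [_ [A [fA _] <-]] := ub_ereal_sup_adherent e20 finv.
move=> Ae; have {}Ae : (sqnorm v - (e ^+ 2)%:E < \sum_(x \in A) (sqmod (v x))%:E)%E := Ae.
rewrite fsbig_finite // sumEFin l2_sqnormE // -EFinB lte_fin in Ae.
set a := finmap.enum_fset _ in Ae; rewrite -/(sqnorm_seq v a) in Ae.
exists A; split => // s us As; apply: l2_of_sqnorm_seq_le; first exact: ltW.
move=> t ut; rewrite sqnorm_seq_vsub_trunc.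
have as_ : sqnorm_seq v a <= sqnorm_seq v s.
  apply: sqnorm_seq_subset => //; first exact: finmap.fset_uniq.
  by move=> x; rewrite in_fset_set // inE => /As.
have ust : uniq (s ++ [seq x <- t | x \notin s]).
  rewrite cat_uniq us filter_uniq // andbT; apply/hasPn => x.
  by rewrite mem_filter => /andP [].
have := sqnorm_seq_le lv ust; rewrite /sqnorm_seq big_cat /=.
rewrite -/(sqnorm_seq v s) -/(sqnorm_seq v _); lra.
Qed.

Lemma l2norm_le_of_cvg v (w : nat -> vec) eta (c : nat -> R) (l : R) :
  (forall x, complex.Re (w m x) @[m --> \oo] --> complex.Re (eta x)) ->
  (forall x, complex.Im (w m x) @[m --> \oo] --> complex.Im (eta x)) ->
  c @ \oo --> l -> (forall m, l2 (vsub v (w m)) /\ l2norm (vsub v (w m)) <= c m) ->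
  l2 (vsub v eta) /\ l2norm (vsub v eta) <= l.
Proof.
move=> cvRe cvIm cl vw.
have c_ge0 m : 0 <= c m := le_trans (l2norm_ge0 _) (vw m).2.
have l0 : 0 <= l by apply: (ler_cvg_to (cvg_cst 0) cl); near=> m; exact: c_ge0.
apply: l2_of_sqnorm_seq_le => // t ut.
have cv_sqmod x : sqmod (v x - w m x) @[m --> \oo] --> sqmod (v x - eta x).
  have -> : (fun m => sqmod (v x - w m x)) = fun m =>
      (complex.Re (v x) - complex.Re (w m x)) * (complex.Re (v x) - complex.Re (w m x)) +
      (complex.Im (v x) - complex.Im (w m x)) * (complex.Im (v x) - complex.Im (w m x)).
    by apply: funext => m; rewrite /sqmod ReB ImB !expr2.
  rewrite /sqmod ReB ImB !expr2.
  by apply: cvgD; apply: cvgM; apply: cvgB => //; exact: cvg_cst.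
apply: (@ler_cvg_to _ \oo _ _ (fun m => sqnorm_seq (vsub v (w m)) t) (fun m => c m * c m)).
- by apply: cvg_big => //; [exact: add_continuous | move=> x _; exact: cv_sqmod].
- by rewrite expr2; exact: cvgM.
- near=> m; rewrite -expr2; apply: le_trans (sqnorm_seq_le (vw m).1 ut) _.
  by rewrite ler_sqr ?nnegrE ?l2norm_ge0 ?c_ge0 // (vw m).2.
Unshelve. all: by end_near.
Qed.

Lemma l2_cauchy_cvg (w : nat -> vec) (r : nat -> R) : r @ \oo --> 0 ->
  (forall n, l2 (w n)) ->
  (forall n m, l2 (vsub (w n) (w m)) /\ l2norm (vsub (w n) (w m)) <= r n + r m) ->
  exists2 eta, l2 eta & forall n, l2 (vsub (w n) eta) /\ l2norm (vsub (w n) eta) <= r n.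
Proof.
move=> r0 lw wr.
have rnm0 n m : 0 <= r n + r m := le_trans (l2norm_ge0 _) (wr n m).2.
have sq_wr n m x : sqmod (w n x - w m x) <= (r n + r m) ^+ 2.
  apply: le_trans (sqmod_le_l2norm x (wr n m).1) _.
  by rewrite ler_sqr ?nnegrE ?l2norm_ge0 ?rnm0 // (wr n m).2.
have cvRe x : cvgn (fun n => complex.Re (w n x)).
  by apply: (cvgn_dist_le r0) => n m; rewrite -ReB normr_Re_le ?sq_wr.
have cvIm x : cvgn (fun n => complex.Im (w n x)).
  by apply: (cvgn_dist_le r0) => n m; rewrite -ImB normr_Im_le ?sq_wr.
pose eta : vec := fun x =>
  limn (fun n => complex.Re (w n x)) +i* limn (fun n => complex.Im (w n x)).
have wn_eta n : l2 (vsub (w n) eta) /\ l2norm (vsub (w n) eta) <= r n.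
  apply: (l2norm_le_of_cvg (eta := eta) cvRe cvIm _ (wr n)).
  by rewrite -[X in _ --> X]addr0; apply: cvgD => //; exact: cvg_cst.
exists eta => //; have -> : eta = vsub (w 0%N) (vsub (w 0%N) eta).
  by apply: funext => x; rewrite /vsub subKr.
exact: l2_vsub (lw 0%N) (wn_eta 0%N).1.
Qed.

End L2Space.

Section Operators.
Variables (R : realType) (X : choiceType).
Local Notation vec := (vec R X).
Local Notation l2 := (@l2 R X).
Local Notation c00 := (@c00 R X).
Local Notation delta := (@delta R X).
Implicit Types (u v xi : vec) (s : seq X).

Lemma c00D u v : c00 u -> c00 v -> c00 (fun x => u x + v x).
Proof.
move=> cu cv; have : finite_set ([set x | u x != 0] `|` [set x | v x != 0]).
  by rewrite finite_setU.
apply: sub_finite_set => x /= uv0; case: (eqVneq (u x) 0) => [u0|]; last by left.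
by right; rewrite u0 add0r in uv0.
Qed.

Lemma c00Z (a : R[i]) v : c00 v -> c00 (fun x => a * v x).
Proof. by apply: sub_finite_set => x /=; apply: contra_neq => ->; rewrite mulr0. Qed.

Lemma delta_c00 (y : X) : c00 (delta y).
Proof.
by apply: (@c00_seq _ _ _ [:: y]) => x; rewrite /delta mem_seq1; case: ifP; rewrite ?eqxx.
Qed.

Section OperatorLaws.
Variables (dom : set vec) (h : vec -> vec).
Hypothesis hop : is_operator dom h.

Lemma op_dom_l2 xi : dom xi -> l2 xi.
Proof. by case: hop => + _; apply. Qed.

Lemma op_l2 xi : dom xi -> l2 (h xi).
Proof. by case: hop => _ [_ [_ [_ [+ _]]]]; apply. Qed.

Lemma op0 : h (fun _ => 0) = fun _ => 0.
Proof.
case: hop => _ [dom0 [_ [_ [_ [_ hZ]]]]].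
have := hZ 0 _ dom0; under [fun x => 0 * _]eq_fun do rewrite mul0r.
by move=> ->; apply: funext => x; rewrite mul0r.
Qed.

Lemma op_vsub u v : dom u -> dom v -> dom (vsub u v) /\ h (vsub u v) = vsub (h u) (h v).
Proof.
case: hop => _ [_ [domD [domZ [_ [hD hZ]]]]] du dv.
have -> : vsub u v = fun x => u x + (fun x => -1 * v x) x.
  by apply: funext => x; rewrite /vsub mulN1r.
split; first by apply: domD => //; apply: domZ.
rewrite hD ?hZ //; last exact: domZ.
by apply: funext => x; rewrite /vsub mulN1r.
Qed.

Lemma op_bound_le (M d : R) v :
  (forall v, dom v -> l2norm v <= 1 -> l2norm (h v) <= M) ->
  dom v -> 0 < d -> l2norm v <= d -> l2norm (h v) <= M * d.
Proof.
case: hop => _ [_ [_ [domZ [_ [_ hZ]]]]] hM dv d0 vd.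
pose v' := fun x => (d^-1)%:C * v x.
have dv' : dom v' by apply: domZ.
have dV0 : 0 <= d^-1 by rewrite invr_ge0 ltW.
have v'1 : l2norm v' <= 1.
  apply: le_trans (l2normZ_le (op_dom_l2 dv) dV0).2 _.
  by rewrite -(mulVf (lt0r_neq0 d0)); apply: ler_wpM2l.
have -> : v = fun x => d%:C * v' x.
  by apply: funext => x; rewrite /v' mulrA -rmorphM /= divff ?gt_eqF // mul1r.
rewrite hZ //; apply: le_trans (l2normZ_le (op_l2 dv') (ltW d0)).2 _.
by rewrite mulrC; apply: ler_wpM2r; [exact: ltW | exact: hM].
Qed.

Lemma op_bound_cauchy (M : R) (u : nat -> vec) xi (e : nat -> R) :
  (forall v, dom v -> l2norm v <= 1 -> l2norm (h v) <= M) -> (forall n, 0 < e n) ->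
  (forall n, dom (u n) /\ l2 (vsub (u n) xi) /\ l2norm (vsub (u n) xi) <= e n) ->
  forall n m, l2 (vsub (h (u n)) (h (u m))) /\
    l2norm (vsub (h (u n)) (h (u m))) <= M * e n + M * e m.
Proof.
move=> hM e0 uxi n m; have [dun [lun un_e]] := uxi n; have [dum [lum um_e]] := uxi m.
have [luu duu] := l2norm_distD lun (l2_vsubC lum).
rewrite [l2norm (vsub xi _)]l2norm_vsubC in duu.
have [duu' <-] := op_vsub dun dum; split; first exact: op_l2.
rewrite -mulrDr; apply: op_bound_le => //; first by rewrite addr_gt0.
by apply: le_trans duu _; apply: lerD.
Qed.

Lemma op_trunc s xi : c00 `<=` dom -> uniq s ->
  h (trunc s xi) = fun x => \sum_(y <- s) xi y * h (delta y) x.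
Proof.
case: hop => _ [_ [_ [_ [_ [hD hZ]]]]] c00_dom.
elim: s => [|y s IH] /=.
  have -> : trunc [::] xi = fun _ => 0 by apply: funext => x.
  by move=> _; rewrite op0; apply: funext => x; rewrite big_nil.
case/andP => ys us.
have -> : trunc (y :: s) xi = fun x => (fun x => xi y * delta y x) x + trunc s xi x.
  apply: funext => x; rewrite /trunc /delta in_cons.
  have [->|nxy] := eqVneq x y; first by rewrite (negbTE ys) mulr1 addr0.
  by rewrite mulr0 add0r.
have dy := c00_dom _ (delta_c00 y); have dxy := c00_dom _ (c00Z (xi y) (delta_c00 y)).
rewrite hD ?hZ ?IH //; last exact: c00_dom _ (trunc_c00 s xi).
by apply: funext => x; rewrite big_cons.
Qed.

End OperatorLaws.

Lemma is_operator_vsub_c00 dom_h h dom_k k :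
  is_operator dom_h h -> is_operator dom_k k -> c00 `<=` dom_h -> c00 `<=` dom_k ->
  is_operator c00 (fun xi => vsub (h xi) (k xi)).
Proof.
move=> hop kop ch ck.
case: (hop) => _ [_ [_ [_ [_ [hD hZ]]]]]; case: (kop) => _ [_ [_ [_ [_ [kD kZ]]]]].
split; first by move=> v /ch /(op_dom_l2 hop).
split; first by apply: (@c00_seq _ _ _ [::]) => x; rewrite eqxx.
split; first exact: c00D.
split; first exact: c00Z.
split.
  move=> v cv; apply: l2_vsub; [apply: (op_l2 hop) | apply: (op_l2 kop)].
  - exact: ch.
  - exact: ck.
split=> [u v cu cv | a v cv] /=.
  rewrite hD ?kD; try by [apply: ch | apply: ck].
  by apply: funext => x; rewrite /vsub; ring.
rewrite hZ ?kZ; try by [apply: ch | apply: ck].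
by apply: funext => x; rewrite /vsub; ring.
Qed.

Lemma opnorm_ub (D : set vec) (T : vec -> vec) v : D v -> l2norm v <= 1 ->
  ((l2norm (T v))%:E <= opnorm D T)%E.
Proof. by move=> Dv v1; apply: ereal_sup_ubound; exists v. Qed.

Lemma opnorm_lt_bound (D : set vec) (T : vec -> vec) : (opnorm D T < +oo)%E ->
  exists2 M, 0 <= M & forall v, D v -> l2norm v <= 1 -> l2norm (T v) <= M.
Proof.
move: (@opnorm_ub D T); case: (opnorm D T) => [r| |] // ub _.
- by exists `|r| => // v Dv v1; apply: le_trans (ler_norm r); rewrite -lee_fin ub.
- by exists 0 => // v Dv v1; have := ub v Dv v1; rewrite leeNy_eq.
Qed.

Lemma opnorm_vsubC (D : set vec) (h k : vec -> vec) :
  opnorm D (fun xi => vsub (h xi) (k xi)) = opnorm D (fun xi => vsub (k xi) (h xi)).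
Proof. by rewrite /opnorm; congr ereal_sup; apply: eq_imagel => xi _; rewrite l2norm_vsubC. Qed.

Lemma admissible_trunc_approx dom h xi e : admissible dom h -> dom xi -> 0 < e ->
  eventually_finite (fun s => l2norm (vsub (h xi) (h (trunc s xi))) < e).
Proof.
case=> hop [_ [c00_dom hexp]] dxi e0; have [F [fF Fe]] := hexp xi dxi e e0.
exists F; split => // s us Fs; rewrite (op_trunc hop) //.
by under eq_fun do rewrite fsbig_seq //; apply: Fe => //; exact: finite_seq.
Qed.

End Operators.

Section AdmissiblePair.
Variables (R : realType) (X : choiceType).
Local Notation vec := (vec R X).
Local Notation l2 := (@l2 R X).
Local Notation c00 := (@c00 R X).
Variables (dom_h dom_k : set vec) (h k : vec -> vec).
Hypotheses (hadm : admissible dom_h h) (kadm : admissible dom_k k).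
Local Notation T := (fun xi => vsub (h xi) (k xi)).

Lemma admissible_trunc_seq xi (e : nat -> R) : dom_h xi -> (forall n, 0 < e n) ->
  exists u : nat -> vec, forall n,
    (c00 (u n) /\ l2 (vsub (u n) xi) /\ l2norm (vsub (u n) xi) <= e n) /\
    l2norm (vsub (h xi) (h (u n))) <= e n.
Proof.
move=> dxi e0; have lxi := op_dom_l2 hadm.1 dxi.
have /choice [S uS] n := eventually_finite_ex
  (eventually_finiteI (trunc_approx lxi (e0 n)) (admissible_trunc_approx hadm dxi (e0 n))).
exists (fun n => trunc (S n) xi) => n; have [_ [uxi hxi]] := uS n.
by split; [split; first exact: trunc_c00 | exact: ltW].
Qed.

Lemma l2norm_vsub_le_opnorm_c00 xi : dom_h xi -> dom_k xi -> l2norm xi <= 1 ->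
  ((l2norm (T xi))%:E <= opnorm c00 T)%E.
Proof.
have [hop [_ [ch _]]] := hadm; have [kop [_ [ck _]]] := kadm.
move=> dh dk xi1; apply/lee_addgt0Pr => e e0; have e2 : 0 < e / 2 by rewrite divr_gt0.
have [s [us [hs ks]]] := eventually_finite_ex (eventually_finiteI
  (admissible_trunc_approx hadm dh e2) (admissible_trunc_approx kadm dk e2)).
set P := trunc s xi; have cP : c00 P := trunc_c00 s xi.
have P1 : l2norm P <= 1 := le_trans (l2norm_trunc_le s (op_dom_l2 hop dh)).2 xi1.
have lhP := op_l2 hop (ch _ cP); have lkP := op_l2 kop (ck _ cP).
have [l1 d1] := l2norm_distD (l2_vsub lhP lkP) (l2_vsub lkP (op_l2 kop dk)).
have [_ d2] := l2norm_distD (l2_vsub (op_l2 hop dh) lhP) l1.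
rewrite l2norm_vsubC in ks.
apply: le_trans (leeD2r e%:E (opnorm_ub T cP P1)); rewrite -EFinD lee_fin; lra.
Qed.

Lemma opnorm_vsub_c00 : opnorm (dom_h `&` dom_k) T = opnorm c00 T.
Proof.
apply/eqP; rewrite eq_le; apply/andP; split.
  apply: ge_ereal_sup => _ [xi [[dh dk] xi1] <-].
  exact: l2norm_vsub_le_opnorm_c00.
apply: ereal_sup_le => _ [xi [cxi xi1] <-]; exists xi => //.
by split => //; split; [apply: hadm.2.2.1 | apply: kadm.2.2.1].
Qed.

Lemma dom_subset_of_opnorm_c00 : (opnorm c00 T < +oo)%E -> dom_h `<=` dom_k.
Proof.
have [hop [_ [ch _]]] := hadm; have [kop [kcl [ck _]]] := kadm.
have Top := is_operator_vsub_c00 hop kop ch ck.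
move=> /opnorm_lt_bound [M M0 TM] xi dxi.
have [u uxi] := admissible_trunc_seq dxi (@harmonic_gt0 R).
have cvg_M c : c * harmonic n @[n --> \oo] --> (0 : R).
  by rewrite -(mulr0 c); apply: cvgMr; exact: cvg_harmonic.
have [eta leta Tu_eta] := l2_cauchy_cvg (cvg_M M) (fun n => op_l2 Top (uxi n).1.1)
  (op_bound_cauchy Top TM (@harmonic_gt0 R) (fun n => (uxi n).1)).
have lhxi := op_l2 hop dxi.
suff [] : dom_k xi /\ k xi = vsub (h xi) eta by [].
apply: (kcl u) => //.
- by move=> n; apply: ck; exact: (uxi n).1.1.
- exact: (op_dom_l2 hop dxi).
- exact: l2_vsub.
- apply: (squeeze_cvgr _ (cvg_cst 0) cvg_harmonic).
  by near=> n; rewrite l2norm_ge0 /=; have [[_ [_ ->]] _] := uxi n.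
- apply: (squeeze_cvgr _ (cvg_cst 0) (cvg_M (1 + M))).
  near=> n; have [[cun _] hun] := uxi n.
  have lhu := l2_vsub lhxi (op_l2 hop (ch _ cun)).
  have [_] := l2norm_vsub_vsub_le (b := k (u n)) lhu (Tu_eta n).1.
  rewrite l2norm_ge0 mulrDl mul1r => /le_trans; apply; exact: lerD hun (Tu_eta n).2.
Unshelve. all: by end_near.
Qed.

End AdmissiblePair.

Theorem proposition2p1p2 (R : realType) (X : choiceType) (d : X -> X -> R)
  (dom_h dom_k : set (vec R X)) (h k : vec R X -> vec R X) :
  is_metric d -> unif_loc_finite d ->
  admissible dom_h h -> admissible dom_k k ->
  (* (a) *)
  opnorm (dom_h `&` dom_k) (fun xi => vsub (h xi) (k xi))
    = opnorm (@c00 R X) (fun xi => vsub (h xi) (k xi)) /\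
  (* (b) *)
  ((opnorm (@c00 R X) (fun xi => vsub (h xi) (k xi)) < +oo)%E -> dom_h = dom_k).
Proof.
move=> _ _ hadm kadm; split; first exact: opnorm_vsub_c00.
move=> hk_bounded; apply/seteqP; split.
  exact: dom_subset_of_opnorm_c00 hadm kadm hk_bounded.
by apply: dom_subset_of_opnorm_c00 kadm hadm _; rewrite opnorm_vsubC.
Qed.
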